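(* Let $X$ be a locally compact Hausdorff space, $F:X\multimap X$ a discrete multivalued dynamical system, and $N$ an isolating block with respect to $F$. Let $U$ be an open neighborhood of $F(N)\cap F^{-1}(N)\cap N$ with $\operatorname{cl}U\subset\operatorname{int}N$. Put $P_1:=(F(N)\cap N)\cup\operatorname{cl}U$ and $P_2:=F(N)\cap\operatorname{bd}N$. Then $P=(P_1,P_2)$ is a weak index pair in $N$.
   Context: A multivalued map $F:X\multimap Y$ assigns to each $x\in X$ a subset $F(x)\subset Y$; $F(A)=\bigcup_{x\in A}F(x)$; $F^{-1}(B)=\{x: F(x)\cap B\neq\emptyset\}$. A discrete multivalued dynamical system (dmds) on $X$ is a usc map $F:X\times\mathbb{Z}\multimap X$ with compact values such that $F(x,0)=\{x\}$; $F(F(x,n),m)=F(x,n+m)$ whenever $nm\ge0$; and $y\in F(x,-1)\iff x\in F(y,1)$; it is identified with its generator $F=F(\cdot,1)$. A solution for $F$ through $x$ on an interval $I\ni 0$ of $\mathbb{Z}$ is $\sigma:I\to X$ with $\sigma(0)=x$, $\sigma(n+1)\in F(\sigma(n))$. For $N\subset X$, $\operatorname{Inv}N$ is the set of $x\in N$ admitting a solution $\sigma:\mathbb{Z}\to N$ through $x$. A compact $N$ is an isolating block if $N\cap F(N)\cap F^{-1}(N)\subset\operatorname{int}N$. The $F$-boundary of $A\subset X$ is $\operatorname{bd}_F A:=\operatorname{cl}A\cap\operatorname{cl}(F(A)\setminus A)$. A pair $P=(P_1,P_2)$ of compact sets $P_2\subset P_1\subset N$ is a weak index pair in $N$ if (a)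 $F(P_i)\cap N\subset P_i$ for $i=1,2$; (b) $\operatorname{bd}_F P_1\subset P_2$; (c) $\operatorname{Inv}N\subset\operatorname{int}(P_1\setminus P_2)$; (d) $P_1\setminus P_2\subset\operatorname{int}N$. *)

From Stdlib Require Import ZArith List.
Open Scope Z_scope.

Definition set (X : Type) := X -> Prop.

Section Topo.
Context {X : Type}.

Definition subset (A B : set X) : Prop := forall x, A x -> B x.
Definition setI (A B : set X) : set X := fun x => A x /\ B x.
Definition setU (A B : set X) : set X := fun x => A x \/ B x.
Definition setD (A B : set X) : set X := fun x => A x /\ ~ B x.
Definition setC (A : set X) : set X := fun x => ~ A x.

Definition is_topology (opn : set X -> Prop) : Prop :=
  opn (fun _ => True) /\
  (forall U V, opn U -> opn V -> opn (setI U V)) /\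
  (forall (C : set X -> Prop), (forall U, C U -> opn U) ->
      opn (fun x => exists U, C U /\ U x)).

Definition interior (opn : set X -> Prop) (A : set X) : set X :=
  fun x => exists U, opn U /\ U x /\ subset U A.

Definition closure (opn : set X -> Prop) (A : set X) : set X :=
  fun x => forall U, opn U -> U x -> exists y, U y /\ A y.

Definition bd (opn : set X -> Prop) (A : set X) : set X :=
  setI (closure opn A) (closure opn (setC A)).

Definition compact (opn : set X -> Prop) (K : set X) : Prop :=
  forall (C : set X -> Prop), (forall U, C U -> opn U) ->
    (forall x, K x -> exists U, C U /\ U x) ->
    exists l : list (set X), (forall U, In U l -> C U) /\
      (forall x, K x -> exists U, In U l /\ U x).

Definition hausdorff (opn : set X -> Prop) : Prop :=
  forall x y, x <> y -> exists U V, opn U /\ opn V /\ U x /\ V y /\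
    (forall z, U z -> V z -> False).

Definition locally_compact (opn : set X -> Prop) : Prop :=
  forall x, exists K, compact opn K /\ interior opn K x.

(* multivalued maps F : X -o X, represented as relations: F x y <-> y \in F(x) *)
Definition mimage (F : X -> set X) (A : set X) : set X :=
  fun y => exists x, A x /\ F x y.
Definition mpreimage (F : X -> set X) (B : set X) : set X :=
  fun x => exists y, F x y /\ B y.

Definition usc (opn : set X -> Prop) (F : X -> set X) : Prop :=
  forall U, opn U -> opn (fun x => subset (F x) U).

(* F : X × Z -o X is usc for the product topology with Z discrete,
   i.e. each section F(·,n) is usc *)
Definition dmds (opn : set X -> Prop) (F : X -> Z -> set X) : Prop :=
  (forall n, usc opn (fun x => F x n)) /\
  (forall x n, compact opn (F x n)) /\
  (forall x y, F x 0 y <-> y = x) /\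
  (forall x n m, 0 <= n * m ->
     forall y, mimage (fun z => F z m) (F x n) y <-> F x (n + m) y) /\
  (forall x y, F x (-1) y <-> F y 1 x).

Definition isolating_block (opn : set X -> Prop) (F : X -> set X) (N : set X) : Prop :=
  compact opn N /\
  subset (setI N (setI (mimage F N) (mpreimage F N))) (interior opn N).

Definition Inv (F : X -> set X) (N : set X) : set X :=
  fun x => N x /\ exists sigma : Z -> X,
     sigma 0 = x /\ (forall n, F (sigma n) (sigma (n + 1))) /\ (forall n, N (sigma n)).

Definition F_bd (opn : set X -> Prop) (F : X -> set X) (A : set X) : set X :=
  setI (closure opn A) (closure opn (setD (mimage F A) A)).

Definition weak_index_pair (opn : set X -> Prop) (F : X -> set X)
    (N P1 P2 : set X) : Prop :=
  compact opn P1 /\ compact opn P2 /\ subset P2 P1 /\ subset P1 N /\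
  subset (setI (mimage F P1) N) P1 /\
  subset (setI (mimage F P2) N) P2 /\
  subset (F_bd opn F P1) P2 /\
  subset (Inv F N) (interior opn (setD P1 P2)) /\
  subset (setD P1 P2) (interior opn N).

End Topo.

(* The isolating-block condition says that a point of F(N) ∩ N with an image in
   N lies in int N; so no point of P2 ⊆ bd N has an image in N, and F(P2) ∩ N is
   empty.  Invariant points lie in the open set U ⊆ cl U ⊆ int N, which misses
   bd N.  Compactness of P1 and P2 comes from compactness of F(N), the usc image
   of a compact set under a compact-valued map, and from compact sets being
   closed in a Hausdorff space. *)

From Stdlib Require Import ZArith List Classical.
Open Scope Z_scope.

Definition list_union {X : Type} (l : list (set X)) : set X :=
  fun y => exists U, In U l /\ U y.

Lemma list_union_app {X : Type} (l1 l2 : list (set X)) x :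
  list_union (l1 ++ l2) x <-> list_union l1 x \/ list_union l2 x.
Proof.
  split.
  - intros [U [i Ux]]; apply in_app_or in i as [i|i]; [left|right]; exists U; auto.
  - intros [[U [i Ux]]|[U [i Ux]]]; exists U; split; auto; apply in_or_app; auto.
Qed.

Lemma list_union_concat {X : Type} (C : set X -> Prop) (G : set X -> set X)
    (l : list (set X)) :
  (forall V, In V l -> exists l', (forall U, In U l' -> C U) /\
     subset (G V) (list_union l')) ->
  exists L, (forall U, In U L -> C U) /\
    forall V, In V l -> subset (G V) (list_union L).
Proof.
  induction l as [|V l IH]; intros Hl.
  - exists nil; split; intros _ [].
  - destruct IH as [L [HL HLcov]]; [intros; apply Hl; right; auto|].
    destruct (Hl V (or_introl eq_refl)) as [l' [Hl' Hl'cov]].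
    exists (l' ++ L); split.
    + intros U i; apply in_app_or in i as [i|i]; auto.
    + intros V' [<-|i] y Gy; apply list_union_app; [left|right]; auto.
      exact (HLcov V' i y Gy).
Qed.

Lemma list_union_restrict {X : Type} (C D : set X -> Prop) (A : set X)
    (l : list (set X)) :
  (forall U, In U l -> C U \/ D U) ->
  (forall U, D U -> forall z, U z -> A z -> False) ->
  exists l', (forall U, In U l' -> C U) /\
    subset (setI A (list_union l)) (list_union l').
Proof.
  intros Hl HD. induction l as [|U l IH].
  - exists nil; split; [intros _ []|intros x [_ [V [[] _]]]].
  - destruct IH as [l' [Hl' Hcov]]; [intros; apply Hl; right; auto|].
    destruct (Hl U (or_introl eq_refl)) as [CU|DU].
    + exists (U :: l'); split; [intros V [<-|i]; auto|].
      intros x [Ax [V [[<-|i] Vx]]]; [exists U; split; [left|]; auto|].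
      destruct (Hcov x (conj Ax (ex_intro _ V (conj i Vx)))) as [W [iW Wx]].
      exists W; split; [right|]; auto.
    + exists l'; split; auto.
      intros x [Ax [V [[<-|i] Vx]]]; [exfalso; eauto|].
      apply Hcov; split; [|exists V]; auto.
Qed.

Section Topology.
Context {X : Type} (opn : set X -> Prop).

Lemma subset_closure A : subset A (closure opn A).
Proof. intros x Ax V _ Vx; exists x; auto. Qed.

Lemma closure_mono A B : subset A B -> subset (closure opn A) (closure opn B).
Proof.
  intros sAB x cx V oV Vx; destruct (cx V oV Vx) as [y [Vy Ay]]; exists y; auto.
Qed.

Lemma closure_idem A : subset (closure opn (closure opn A)) (closure opn A).
Proof. intros x cx V oV Vx; destruct (cx V oV Vx) as [y [Vy cy]]; exact (cy V oV Vy). Qed.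

Lemma closure_setI A B :
  subset (closure opn (setI A B)) (setI (closure opn A) (closure opn B)).
Proof. intros x cx; split; revert x cx; apply closure_mono; intros y [? ?]; auto. Qed.

Lemma bd_closed A : subset (closure opn (bd opn A)) (bd opn A).
Proof. intros x cx; apply closure_setI in cx as [c1 c2]; split; apply closure_idem; auto. Qed.

Lemma interior_subset A : subset (interior opn A) A.
Proof. intros x [V [_ [Vx sV]]]; auto. Qed.

Lemma interior_closure_setC_disjoint A x :
  interior opn A x -> closure opn (setC A) x -> False.
Proof.
  intros [V [oV [Vx sV]]] cx; destruct (cx V oV Vx) as [y [Vy nAy]]; auto.
Qed.

Lemma interior_of_not_bd A x : A x -> ~ bd opn A x -> interior opn A x.
Proof.
  intros Ax nbd; apply NNPP; intros nint; apply nbd.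
  split; [apply subset_closure; auto|].
  intros V oV Vx; apply NNPP; intros nV; apply nint.
  exists V; split; [|split]; auto.
  intros y Vy; apply NNPP; intros nAy; eauto.
Qed.

Lemma closed_not_in_nbhd A x : subset (closure opn A) A -> ~ A x ->
  exists V, opn V /\ V x /\ forall z, V z -> A z -> False.
Proof.
  intros clA nAx; apply NNPP; intros nV; apply nAx, clA.
  intros V oV Vx; apply NNPP; intros nVA; apply nV.
  exists V; split; [|split]; eauto.
Qed.

Lemma compact_setU K1 K2 :
  compact opn K1 -> compact opn K2 -> compact opn (setU K1 K2).
Proof.
  intros H1 H2 C HC Hcov.
  destruct (H1 C HC) as [l1 [Hl1 Hcov1]]; [intros x k; apply Hcov; left; auto|].
  destruct (H2 C HC) as [l2 [Hl2 Hcov2]]; [intros x k; apply Hcov; right; auto|].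
  exists (l1 ++ l2); split.
  - intros U i; apply in_app_or in i as [i|i]; auto.
  - intros x [k|k]; apply list_union_app; [left; exact (Hcov1 x k)|right; exact (Hcov2 x k)].
Qed.

Lemma closed_subset_compact K A : compact opn K -> subset A K ->
  subset (closure opn A) A -> compact opn A.
Proof.
  intros HK sAK clA C HC Hcov.
  set (D := fun V => opn V /\ forall z, V z -> A z -> False).
  destruct (HK (fun V => C V \/ D V)) as [l [Hl HlK]].
  - intros V [CV|[oV _]]; auto.
  - intros x Kx; destruct (classic (A x)) as [Ax|nAx].
    + destruct (Hcov x Ax) as [U [CU Ux]]; exists U; split; [left|]; auto.
    + destruct (closed_not_in_nbhd A x clA nAx) as [V [oV [Vx HV]]].
      exists V; split; [right; split|]; auto.
  - destruct (list_union_restrict C D A l Hl) as [l' [Hl' Hcov']];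
      [intros V [_ HV]; exact HV|].
    exists l'; split; [exact Hl'|]; intros x Ax; apply Hcov'; split; [|apply HlK, sAK]; auto.
Qed.

Section Topological.
Hypothesis Htop : is_topology opn.

Lemma open_list_union (l : list (set X)) :
  (forall U, In U l -> opn U) -> opn (list_union l).
Proof. intros Hl; exact (proj2 (proj2 Htop) (fun U => In U l) Hl). Qed.

Lemma separated_from_list x (l : list (set X)) :
  (forall U, In U l -> exists V, opn V /\ V x /\ forall z, U z -> V z -> False) ->
  exists W, opn W /\ W x /\ forall U, In U l -> forall z, U z -> W z -> False.
Proof.
  induction l as [|U l IH]; intros Hl.
  - exists (fun _ => True); split; [apply Htop|split; [auto|intros _ []]].
  - destruct IH as [W [oW [Wx HW]]]; [intros; apply Hl; right; auto|].
    destruct (Hl U (or_introl eq_refl)) as [V [oV [Vx HV]]].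
    exists (setI W V); split; [apply Htop; auto|split; [split; auto|]].
    intros U' [<-|i] z Uz [Wz Vz]; eauto.
Qed.

Lemma compact_closed : hausdorff opn -> forall K, compact opn K ->
  subset (closure opn K) K.
Proof.
  intros Hh K HK x cx; apply NNPP; intros nKx.
  set (C := fun W => opn W /\ exists V, opn V /\ V x /\ forall z, W z -> V z -> False).
  destruct (HK C) as [l [Hl HlK]].
  - intros W [oW _]; exact oW.
  - intros y Ky.
    destruct (Hh x y) as [V [W [oV [oW [Vx [Wy HVW]]]]]]; [intros ->; auto|].
    exists W; split; [split; [|exists V; split; [|split]]|]; eauto.
  - destruct (separated_from_list x l) as [W [oW [Wx HW]]];
      [intros U i; exact (proj2 (Hl U i))|].
    destruct (cx W oW Wx) as [y [Wy Ky]].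
    destruct (HlK y Ky) as [U [i Uy]]; eauto.
Qed.

Lemma compact_setI_closed : hausdorff opn -> forall K A, compact opn K ->
  subset (closure opn A) A -> compact opn (setI K A).
Proof.
  intros Hh K A HK clA; apply (closed_subset_compact K); auto.
  - intros x [Kx _]; exact Kx.
  - intros x cx; apply closure_setI in cx as [cK cA].
    split; [apply (compact_closed Hh K HK)|apply clA]; auto.
Qed.

Lemma compact_mimage (F : X -> set X) K : usc opn F ->
  (forall x, compact opn (F x)) -> compact opn K -> compact opn (mimage F K).
Proof.
  intros Hu HF HK C HC Hcov.
  set (D := fun V => opn V /\ exists l, (forall U, In U l -> C U) /\
              subset (mimage F V) (list_union l)).
  destruct (HK D) as [lK [HlK HcovK]].
  - intros V [oV _]; exact oV.
  - intros x Kx.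
    destruct (HF x C HC) as [l [Hl Hcovl]]; [intros y Fy; apply Hcov; exists x; auto|].
    exists (fun z => subset (F z) (list_union l)); split; [split|exact Hcovl].
    + apply Hu, open_list_union; intros; apply HC, Hl; auto.
    + exists l; split; [exact Hl|]; intros y [z [Vz Fzy]]; auto.
  - destruct (list_union_concat C (mimage F) lK) as [L [HL HLcov]];
      [intros V i; exact (proj2 (HlK V i))|].
    exists L; split; [exact HL|]; intros y [x [Kx Fxy]].
    destruct (HcovK x Kx) as [V [i Vx]]; apply (HLcov V i); exists x; auto.
Qed.

End Topological.
End Topology.

Lemma mimage_mono {X : Type} (F : X -> set X) A B :
  subset A B -> subset (mimage F A) (mimage F B).
Proof. intros sAB y [x [Ax Fxy]]; exists x; auto. Qed.

Lemma Inv_subset {X : Type} (F : X -> set X) N :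
  subset (Inv F N) (setI (mimage F N) (setI (mpreimage F N) N)).
Proof.
  intros x [Nx [s [s0 [sF sN]]]]; subst x; split; [|split; auto].
  - exists (s (-1)); split; auto; exact (sF (-1)).
  - exists (s 1); split; auto; exact (sF 0).
Qed.

Section IsolatingBlock.
Variables (X : Type) (opn : set X -> Prop) (F : X -> set X) (N U : set X).
Hypotheses (Htop : is_topology opn) (Hh : hausdorff opn)
  (Husc : usc opn F) (HFcpt : forall x, compact opn (F x))
  (HN : isolating_block opn F N) (oU : opn U)
  (HU : subset (setI (mimage F N) (setI (mpreimage F N) N)) U)
  (HclU : subset (closure opn U) (interior opn N)).

Let P1 := setU (setI (mimage F N) N) (closure opn U).
Let P2 := setI (mimage F N) (bd opn N).

Let compact_block : compact opn N := proj1 HN.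

Lemma block_closed : subset (closure opn N) N.
Proof. exact (compact_closed opn Htop Hh N compact_block). Qed.

Lemma compact_block_image : compact opn (mimage F N).
Proof. exact (compact_mimage opn Htop F N Husc HFcpt compact_block). Qed.

Lemma block_image_closed : subset (closure opn (mimage F N)) (mimage F N).
Proof. exact (compact_closed opn Htop Hh _ compact_block_image). Qed.

Lemma P1_subset_block : subset P1 N.
Proof. intros x [[_ Nx]|cx]; [exact Nx|exact (interior_subset opn N x (HclU x cx))]. Qed.

Lemma compact_P1 : compact opn P1.
Proof.
  apply compact_setU.
  - exact (compact_setI_closed opn Htop Hh _ N compact_block_image block_closed).
  - apply (closed_subset_compact opn N); [exact compact_block| |apply closure_idem].
    intros x cx; exact (interior_subset opn N x (HclU x cx)).
Qed.

Lemma compact_P2 : compact opn P2.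
Proof. exact (compact_setI_closed opn Htop Hh _ _ compact_block_image (bd_closed opn N)). Qed.

Lemma P2_subset_P1 : subset P2 P1.
Proof. intros x [FNx [cx _]]; left; split; [exact FNx|exact (block_closed x cx)]. Qed.

Lemma P1_positively_invariant : subset (setI (mimage F P1) N) P1.
Proof. intros y [FPy Ny]; left; split; [exact (mimage_mono F P1 N P1_subset_block y FPy)|exact Ny]. Qed.

Lemma P2_image_misses_block : forall y, mimage F P2 y -> N y -> False.
Proof.
  intros y [x [[FNx [cx cCx]] Fxy]] Ny.
  apply (interior_closure_setC_disjoint opn N x); [|exact cCx].
  apply (proj2 HN); split; [exact (block_closed x cx)|split; [exact FNx|exists y; auto]].
Qed.

Lemma P2_positively_invariant : subset (setI (mimage F P2) N) P2.
Proof. intros y [FPy Ny]; destruct (P2_image_misses_block y FPy Ny). Qed.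

Lemma F_bd_P1_subset_P2 : subset (F_bd opn F P1) P2.
Proof.
  intros x [cP1 cexit]; split; [|split].
  - apply block_image_closed; apply (closure_mono opn _ (mimage F N)) in cexit;
      [exact cexit|].
    intros y [FPy _]; exact (mimage_mono F P1 N P1_subset_block y FPy).
  - exact (closure_mono opn P1 N P1_subset_block x cP1).
  - apply (closure_mono opn _ (setC N)) in cexit; [exact cexit|].
    intros y [FPy nP1y] Ny; exact (nP1y (P1_positively_invariant y (conj FPy Ny))).
Qed.

Lemma U_subset_P1_minus_P2 : subset U (setD P1 P2).
Proof.
  intros y Uy; split; [right; apply subset_closure; exact Uy|].
  intros [_ [_ cCy]]; apply (interior_closure_setC_disjoint opn N y); [|exact cCy].
  apply HclU, subset_closure; exact Uy.
Qed.

Lemma Inv_subset_interior : subset (Inv F N) (interior opn (setD P1 P2)).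
Proof.
  intros x Invx; exists U; split; [exact oU|split; [|exact U_subset_P1_minus_P2]].
  exact (HU x (Inv_subset F N x Invx)).
Qed.

Lemma P1_minus_P2_subset_interior : subset (setD P1 P2) (interior opn N).
Proof.
  intros x [[[FNx Nx]|cx] nP2x]; [|exact (HclU x cx)].
  apply interior_of_not_bd; [exact Nx|]; intros bdx; exact (nP2x (conj FNx bdx)).
Qed.

Lemma isolating_block_weak_index_pair : weak_index_pair opn F N P1 P2.
Proof.
  exact (conj compact_P1 (conj compact_P2 (conj P2_subset_P1
    (conj P1_subset_block (conj P1_positively_invariant
    (conj P2_positively_invariant (conj F_bd_P1_subset_P2
    (conj Inv_subset_interior P1_minus_P2_subset_interior)))))))).
Qed.

End IsolatingBlock.

Theorem theorem4 (X : Type) (opn : set X -> Prop) (F : X -> Z -> set X)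
  (N U : set X) :
  is_topology opn -> hausdorff opn -> locally_compact opn ->
  dmds opn F ->
  isolating_block opn (fun x => F x 1) N ->
  opn U ->
  subset (setI (mimage (fun x => F x 1) N)
            (setI (mpreimage (fun x => F x 1) N) N)) U ->
  subset (closure opn U) (interior opn N) ->
  weak_index_pair opn (fun x => F x 1) N
    (setU (setI (mimage (fun x => F x 1) N) N) (closure opn U))
    (setI (mimage (fun x => F x 1) N) (bd opn N)).
Proof.
  intros Htop Hh _ [Husc [Hcpt _]] HN oU HU HclU.
  exact (isolating_block_weak_index_pair X opn (fun x => F x 1) N U
           Htop Hh (Husc 1) (fun x => Hcpt x 1) HN oU HU HclU).
Qed.
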